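(* Let $(X,\to)$ be a transition system over an alphabet $A$ and let $R_0\subseteq X\times X$ be a preorder. Consider the map $\beta_{R_0}\colon \mathit{Eq}(\mathcal P(X))\to\mathit{Eq}(\mathcal P(X))$, $\beta_{R_0}(R)=\beta_t(R)\cap (R_0)_H$. Then the least fixpoint $\mu\,\beta_{R_0}$ of $\beta_{R_0}$ in the complete lattice $(\mathit{Eq}(\mathcal P(X)),\supseteq)$ equals the set $\Omega(R_0)$ of all pairs $(X_1,X_2)$ of subsets of $X$ such that: whenever $x_1\in X_1$ and $x_1\xrightarrow{\sigma}x_1'$ for some $\sigma\in A^*$, there is $x_2\in X_2$ with $x_2\xrightarrow{\sigma}x_2'$ and $x_1'\mathrel{R_0}x_2'$; and, symmetrically, whenever $x_2\in X_2$ and $x_2\xrightarrow{\sigma}x_2'$, there is $x_1\in X_1$ with $x_1\xrightarrow{\sigma}x_1'$ and $x_2'\mathrel{R_0}x_1'$.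
   Context: A transition system over $A$ is a pair $(X,\to)$ with $\to\subseteq X\times A\times X$; write $x\xrightarrow{a}x'$ for $(x,a,x')\in\to$, $\delta_a(x)=\{x'\mid x\xrightarrow{a}x'\}$, and for $Y\subseteq X$, $\delta_a[Y]=\bigcup_{y\in Y}\delta_a(y)$. For $\sigma=a_1\cdots a_n\in A^*$, $x\xrightarrow{\sigma}x'$ means $x\xrightarrow{a_1}\cdots\xrightarrow{a_n}x'$ (for the empty word, $x'=x$). $\mathit{Eq}(\mathcal P(X))$ is the set of equivalence relations on $\mathcal P(X)$. For $R\subseteq X\times X$, define $R_{\overrightarrow H}\subseteq\mathcal P(X)\times\mathcal P(X)$ by $X_1\mathrel{R_{\overrightarrow H}}X_2$ iff $\forall x_1\in X_1\,\exists x_2\in X_2\colon x_1\mathrel R x_2$, and $R_H=R_{\overrightarrow H}\cap(R_{\overrightarrow H})^{-1}$. For $S\subseteq X$ and $a\in A$, $\Diamond_a(S)=\{x\mid\exists x'\in S\colon x\xrightarrow{a}x'\}$. Define $\alpha_t\colon\mathcal P(\mathcal P(X))\to\mathit{Eq}(\mathcal P(X))$, $\alpha_t(\mathcal S)=\{(X_1,X_2)\mid\forall S\in\mathcal S\colon(X_1\cap S\neq\emptyset\iff X_2\cap S\neq\emptyset)\}$; $\gamma_t\colon\mathit{Eq}(\mathcal P(X))\to\mathcal P(\mathcal P(X))$, $\gamma_t(R)=\{S\subseteq X\mid\forall(X_1,X_2)\in R\colon(X_1\cap S\neq\emptyset\iff X_2\cap S\neq\emptyset)\}$; $\mathit{lo}_t(\mathcal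 S)=\bigcup_{a\in A}\{\Diamond_a(S)\mid S\in\mathcal S\}\cup\{X\}$; and $\beta_t=\alpha_t\circ\mathit{lo}_t\circ\gamma_t$. *)

From Stdlib Require Import List.
Import ListNotations.
Set Implicit Arguments.

Section TS.
Variables (X A : Type) (step : X -> A -> X -> Prop).

Fixpoint steps (x : X) (sigma : list A) (x' : X) : Prop :=
  match sigma with
  | [] => x' = x
  | a :: s => exists y, step x a y /\ steps y s x'
  end.

Definition pset := X -> Prop.
Definition prel := pset -> pset -> Prop.

Definition is_equiv (R : prel) : Prop :=
  (forall S, R S S) /\ (forall S T, R S T -> R T S) /\
  (forall S T U, R S T -> R T U -> R S U).

Definition meets (Y S : pset) : Prop := exists x, Y x /\ S x.

Definition R_Hright (R0 : X -> X -> Prop) : prel :=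
  fun X1 X2 => forall x1, X1 x1 -> exists x2, X2 x2 /\ R0 x1 x2.

Definition R_H (R0 : X -> X -> Prop) : prel :=
  fun X1 X2 => R_Hright R0 X1 X2 /\ R_Hright R0 X2 X1.

Definition Diamond (a : A) (S : pset) : pset :=
  fun x => exists x', S x' /\ step x a x'.

Definition alpha_t (F : pset -> Prop) : prel :=
  fun X1 X2 => forall S, F S -> (meets X1 S <-> meets X2 S).

Definition gamma_t (R : prel) : pset -> Prop :=
  fun S => forall X1 X2, R X1 X2 -> (meets X1 S <-> meets X2 S).

Definition lo_t (F : pset -> Prop) : pset -> Prop :=
  fun T => (exists a S, F S /\ T = Diamond a S) \/ T = (fun _ => True).

Definition beta_t (R : prel) : prel := alpha_t (lo_t (gamma_t R)).

Definition beta_R0 (R0 : X -> X -> Prop) (R : prel) : prel :=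
  fun X1 X2 => beta_t R X1 X2 /\ R_H R0 X1 X2.

Definition Omega (R0 : X -> X -> Prop) : prel :=
  fun X1 X2 =>
    (forall x1 sigma x1', X1 x1 -> steps x1 sigma x1' ->
       exists x2 x2', X2 x2 /\ steps x2 sigma x2' /\ R0 x1' x2') /\
    (forall x2 sigma x2', X2 x2 -> steps x2 sigma x2' ->
       exists x1 x1', X1 x1 /\ steps x1 sigma x1' /\ R0 x2' x1').

(* least fixpoint of f in the complete lattice (Eq(P(X)), ⊇):
   an equivalence fixpoint that is ⊇ every equivalence fixpoint *)
Definition is_lfp_supseteq (f : prel -> prel) (M : prel) : Prop :=
  is_equiv M /\ f M = M /\
  forall R, is_equiv R -> f R = R -> forall X1 X2, R X1 X2 -> M X1 X2.

End TS.

From Stdlib Require Import List FunctionalExtensionality PropExtensionality.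
Import ListNotations.
Set Implicit Arguments.

(* Call the sets  <>_s (R0 x) = {y | y --s--> y' for some y' with x R0 y'}
   cones.  Omega(R0) is exactly alpha_t of the family of cones: both say that
   X1 and X2 meet the same cones.  Since <>_(a s) = <>_a o <>_s and
   <>_[] (R0 x) = R0 x, a cone in gamma_t R stays in gamma_t (beta_R0 R) after
   prefixing a letter (by beta_t), and the empty-word cones lie in
   gamma_t (beta_R0 R) because of (R0)_H.  Hence every R with R <= beta_R0 R has
   all cones in gamma_t R, i.e. R <= Omega(R0); and Omega(R0) is itself a
   fixpoint because the family of cones is closed under <>_a and covers X. *)

Section Galois.
Variable X : Type.

Lemma alpha_t_equiv (F : pset X -> Prop) : is_equiv (alpha_t F).
Proof.
  split; [|split].
  - intros S U _; reflexivity.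
  - intros S T H U HU; symmetry; auto.
  - intros S T V H1 H2 U HU; rewrite (H1 U HU); auto.
Qed.

Lemma gamma_t_alpha_t (F : pset X -> Prop) S : F S -> gamma_t (alpha_t F) S.
Proof. intros HS X1 X2 H; auto. Qed.

Lemma alpha_t_of_gamma_t (F : pset X -> Prop) (R : prel X) X1 X2 :
  (forall S, F S -> gamma_t R S) -> R X1 X2 -> alpha_t F X1 X2.
Proof. intros HF HR S HS; exact (HF S HS X1 X2 HR). Qed.

Lemma gamma_t_antitone (R R' : prel X) S :
  (forall X1 X2, R X1 X2 -> R' X1 X2) -> gamma_t R' S -> gamma_t R S.
Proof. intros HRR' HS X1 X2 H; auto. Qed.

End Galois.

Section Beta.
Variables (X A : Type) (step : X -> A -> X -> Prop).

Lemma gamma_t_beta_t_Diamond (R : prel X) a S :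
  gamma_t R S -> gamma_t (beta_t step R) (Diamond step a S).
Proof. intros HS X1 X2 H; apply H; left; exists a, S; auto. Qed.

Lemma alpha_t_meets_Diamond (F : pset X -> Prop) X1 X2 a S :
  (forall T, F T -> F (Diamond step a T)) ->
  alpha_t F X1 X2 -> gamma_t (alpha_t F) S ->
  meets X1 (Diamond step a S) -> meets X2 (Diamond step a S).
Proof.
  intros HF H12 HS [x1 [Hx1 [y1 [Hy1 Hxy1]]]].
  set (Z := fun y => exists x2, X2 x2 /\ step x2 a y).
  (* adding the a-successor y1 of x1 to the a-successors of X2 is invisible
     to F, hence to S *)
  assert (HZ : alpha_t F (fun y => y = y1 \/ Z y) Z).
  { intros T HT; split.
    - intros [y [[->|Hy] HTy]]; [|exists y; auto].
      assert (H1 : meets X1 (Diamond step a T)) by (exists x1; split; [|exists y1; split]; auto).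
      destruct (proj1 (H12 _ (HF _ HT)) H1) as [x2 [Hx2 [y2 [HTy2 Hxy2]]]].
      exists y2; split; [exists x2|]; auto.
    - intros [y [Hy HTy]]; exists y; auto. }
  assert (HY : meets (fun y => y = y1 \/ Z y) S) by (exists y1; auto).
  destruct (proj1 (HS _ _ HZ) HY) as [y2 [[x2 [Hx2 Hxy2]] HSy2]].
  exists x2; split; [|exists y2]; auto.
Qed.

Lemma alpha_t_meets_full (F : pset X -> Prop) X1 X2 :
  (forall x, exists S, F S /\ S x) -> alpha_t F X1 X2 ->
  meets X1 (fun _ => True) -> meets X2 (fun _ => True).
Proof.
  intros Hcov H12 [x1 [Hx1 _]].
  destruct (Hcov x1) as [S [HS HSx1]].
  destruct (proj1 (H12 S HS) (ex_intro _ x1 (conj Hx1 HSx1))) as [x2 [Hx2 _]].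
  exists x2; auto.
Qed.

Lemma alpha_t_sub_beta_t (F : pset X -> Prop) :
  (forall a S, F S -> F (Diamond step a S)) -> (forall x, exists S, F S /\ S x) ->
  forall X1 X2, alpha_t F X1 X2 -> beta_t step (alpha_t F) X1 X2.
Proof.
  intros HF Hcov X1 X2 H12.
  assert (H21 : alpha_t F X2 X1) by (apply (alpha_t_equiv F); auto).
  intros T [[a [S [HS ->]]] | ->]; split.
  - apply (alpha_t_meets_Diamond (HF a) H12 HS).
  - apply (alpha_t_meets_Diamond (HF a) H21 HS).
  - apply (alpha_t_meets_full Hcov H12).
  - apply (alpha_t_meets_full Hcov H21).
Qed.

End Beta.

Section Omega.
Variables (X A : Type) (step : X -> A -> X -> Prop) (R0 : X -> X -> Prop).
Hypothesis R0_refl : forall x, R0 x x.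
Hypothesis R0_trans : forall x y z, R0 x y -> R0 y z -> R0 x z.

Fixpoint word_diamond (s : list A) (U : pset X) : pset X :=
  match s with
  | [] => U
  | a :: s' => Diamond step a (word_diamond s' U)
  end.

Lemma word_diamondP s U x :
  word_diamond s U x <-> exists x', steps step x s x' /\ U x'.
Proof.
  revert x; induction s as [|a s IH]; intros x; simpl.
  - split; [intros H; exists x; auto | intros [x' [-> H]]; auto].
  - split.
    + intros [y [Hy Hxy]]; apply IH in Hy; destruct Hy as [x' [Hyx' HU]].
      exists x'; split; [exists y|]; auto.
    + intros [x' [[y [Hxy Hyx']] HU]]; exists y; split; [apply IH; exists x'|]; auto.
Qed.

Definition cones (S : pset X) : Prop := exists s x, S = word_diamond s (R0 x).

Lemma cones_upset x : cones (R0 x).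
Proof. exists [], x; reflexivity. Qed.

Lemma cones_Diamond a S : cones S -> cones (Diamond step a S).
Proof. intros [s [x ->]]; exists (a :: s), x; reflexivity. Qed.

Definition word_simulated (X1 X2 : pset X) : Prop :=
  forall x1 s x1', X1 x1 -> steps step x1 s x1' ->
    exists x2 x2', X2 x2 /\ steps step x2 s x2' /\ R0 x1' x2'.

Lemma word_simulatedP X1 X2 :
  word_simulated X1 X2 <-> forall S, cones S -> meets X1 S -> meets X2 S.
Proof.
  split.
  - intros Hsim S [s [x ->]] [x1 [Hx1 Hcone]].
    apply word_diamondP in Hcone; destruct Hcone as [x1' [Hs1 Hxx1']].
    destruct (Hsim _ _ _ Hx1 Hs1) as [x2 [x2' [Hx2 [Hs2 Hx12']]]].
    exists x2; split; [|apply word_diamondP; exists x2'; split]; eauto.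
  - intros Hcones x1 s x1' Hx1 Hs1.
    assert (Hm : meets X1 (word_diamond s (R0 x1'))).
    { exists x1; split; [|apply word_diamondP; exists x1']; auto. }
    destruct (Hcones _ (ex_intro _ s (ex_intro _ x1' eq_refl)) Hm) as [x2 [Hx2 Hcone]].
    apply word_diamondP in Hcone; destruct Hcone as [x2' [Hs2 Hx12']].
    exists x2, x2'; auto.
Qed.

Lemma Omega_alpha_t_cones : Omega step R0 = alpha_t cones.
Proof.
  extensionality X1; extensionality X2; apply propositional_extensionality.
  change (Omega step R0 X1 X2) with (word_simulated X1 X2 /\ word_simulated X2 X1).
  rewrite !word_simulatedP; split.
  - intros [H12 H21] S HS; split; auto.
  - intros H; split; intros S HS; apply H; auto.
Qed.

Lemma gamma_t_R_H_upset x : gamma_t (R_H R0) (R0 x).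
Proof.
  intros X1 X2 [H12 H21]; split; intros [y1 [Hy1 Hxy1]];
    [destruct (H12 _ Hy1) as [y2 [Hy2 Hy12]] | destruct (H21 _ Hy1) as [y2 [Hy2 Hy12]]];
    exists y2; eauto.
Qed.

Lemma gamma_t_beta_R0_upset (R : prel X) x :
  gamma_t (beta_R0 step R0 R) (word_diamond [] (R0 x)).
Proof.
  apply gamma_t_antitone with (R_H R0); [intros ? ? []; auto | apply gamma_t_R_H_upset].
Qed.

Lemma gamma_t_beta_R0_cons (R : prel X) a s x :
  gamma_t R (word_diamond s (R0 x)) ->
  gamma_t (beta_R0 step R0 R) (word_diamond (a :: s) (R0 x)).
Proof.
  intros Hs; apply gamma_t_antitone with (beta_t step R);
    [intros ? ? []; auto | apply gamma_t_beta_t_Diamond; auto].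
Qed.

Lemma postfixpoint_sub_alpha_t_cones (R : prel X) :
  (forall X1 X2, R X1 X2 -> beta_R0 step R0 R X1 X2) ->
  forall X1 X2, R X1 X2 -> alpha_t cones X1 X2.
Proof.
  intros HR X1 X2; apply alpha_t_of_gamma_t.
  intros S [s [x ->]].
  induction s as [|a s IH]; apply gamma_t_antitone with (beta_R0 step R0 R); auto.
  - apply gamma_t_beta_R0_upset.
  - apply gamma_t_beta_R0_cons, IH.
Qed.

Lemma alpha_t_cones_sub_R_H X1 X2 : alpha_t cones X1 X2 -> R_H R0 X1 X2.
Proof.
  intros H12; split; intros x Hx;
    [destruct (proj1 (H12 _ (cones_upset x))) as [y [Hy Hxy]]
    | destruct (proj2 (H12 _ (cones_upset x))) as [y [Hy Hxy]]];
    eauto; exists x; auto.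
Qed.

Lemma beta_R0_alpha_t_cones : beta_R0 step R0 (alpha_t cones) = alpha_t cones.
Proof.
  extensionality X1; extensionality X2; apply propositional_extensionality; split.
  - intros H; eapply alpha_t_of_gamma_t; [|exact H].
    intros S [[|a s] [x ->]].
    + apply gamma_t_beta_R0_upset.
    + apply gamma_t_beta_R0_cons, gamma_t_alpha_t; exists s, x; reflexivity.
  - intros H; split; [|apply alpha_t_cones_sub_R_H; auto].
    apply alpha_t_sub_beta_t; auto.
    + apply cones_Diamond.
    + intros x; exists (R0 x); split; [apply cones_upset | apply R0_refl].
Qed.

End Omega.

Theorem mainTheorem1 (X A : Type) (step : X -> A -> X -> Prop)
  (R0 : X -> X -> Prop)
  (R0_refl : forall x, R0 x x)
  (R0_trans : forall x y z, R0 x y -> R0 y z -> R0 x z) :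
  is_lfp_supseteq (beta_R0 step R0) (Omega step R0).
Proof.
  rewrite (Omega_alpha_t_cones step R0 R0_refl R0_trans).
  split; [apply alpha_t_equiv | split].
  - apply (beta_R0_alpha_t_cones step R0 R0_refl R0_trans).
  - intros R _ HR; apply postfixpoint_sub_alpha_t_cones; auto.
    intros X1 X2 H; rewrite HR; exact H.
Qed.
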